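(* Let $p$ be a prime and let $\sigma$ and $\alpha$ be cardinals with $m(\sigma)\le\alpha$ and $\alpha^\omega\le\sigma$. Then the topological group $\mathbb{Z}(p)^\sigma$ contains an independent $G_\delta$-dense subset $H$ such that the subgroup generated by $H$ (with the subspace topology) has property $\mathfrak{h}$.
   Context: $\mathbb{Z}(p)$ is the cyclic group of order $p$ (discrete), and $\mathbb{Z}(p)^\sigma$ carries the product topology. A subset of $\mathbb{Z}(p)^\sigma$ is independent if it is linearly independent over $\mathbb{Z}(p)$. A subset is $G_\delta$-dense if it meets every nonempty $G_\delta$-subset. For an infinite cardinal $\alpha$, $m(\alpha)$ is the least cardinality of a $G_\delta$-dense subset of a compact group of weight $\alpha$ (independent of the compact group chosen). A subgroup $N$ of a topological Abelian group $K$ is $h$-embedded if every homomorphism $N\to\mathbb{T}$ ($\mathbb{T}$ the circle group) extends to a continuous homomorphism $K\to\mathbb{T}$; $K$ has property $\mathfrak{h}$ if all its countable subgroups are $h$-embedded. *)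

From mathcomp Require Import all_boot all_algebra.
From Stdlib Require Import Reals.
Set Implicit Arguments. Unset Strict Implicit. Unset Printing Implicit Defensive.
Import GRing.Theory.

Section ZpPower.
Variables (p : nat) (S : Type).
Local Notation G := (S -> 'F_p).
Local Open Scope ring_scope.

Definition zzero : G := fun _ => 0.
Definition zadd (f g : G) : G := fun x => f x + g x.
Definition zopp (f : G) : G := fun x => - f x.

(* product topology of discrete factors: U is open iff every point of U has
   a basic neighbourhood (determined by finitely many coordinates) inside U *)
Definition zopen (U : G -> Prop) : Prop :=
  forall f, U f -> exists F : list S,
    forall g, (forall i, List.In i F -> g i = f i) -> U g.

Definition Gdelta_dense (D : G -> Prop) : Prop :=
  forall U : nat -> G -> Prop, (forall n, zopen (U n)) ->
    (exists f, forall n, U n f) -> exists f, D f /\ forall n, U n f.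

Definition independent (H : G -> Prop) : Prop :=
  forall (n : nat) (h : 'I_n -> G) (c : 'I_n -> 'F_p),
    injective h -> (forall i, H (h i)) ->
    (forall x, \sum_(i < n) c i * h i x = 0) -> forall i, c i = 0.

Inductive gen (H : G -> Prop) : G -> Prop :=
| gen_base f : H f -> gen H f
| gen_zero : gen H zzero
| gen_add f g : gen H f -> gen H g -> gen H (zadd f g)
| gen_opp f : gen H f -> gen H (zopp f).

Definition is_subgroup (C : G -> Prop) : Prop :=
  C zzero /\ (forall f g, C f -> C g -> C (zadd f g)) /\ (forall f, C f -> C (zopp f)).

Definition countable_set (C : G -> Prop) : Prop :=
  exists e : G -> nat, forall f g, C f -> C g -> e f = e g -> f = g.

(* the circle group T = {(a,b) in R^2 | a^2+b^2 = 1}, complex multiplication *)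
Definition on_circle (z : R * R) : Prop :=
  Rplus (Rmult (fst z) (fst z)) (Rmult (snd z) (snd z)) = R1.
Definition cmul (z w : R * R) : R * R :=
  (Rminus (Rmult (fst z) (fst w)) (Rmult (snd z) (snd w)),
   Rplus (Rmult (fst z) (snd w)) (Rmult (snd z) (fst w))).
Definition circ_dist (z w : R * R) : R :=
  Rmax (Rabs (Rminus (fst z) (fst w))) (Rabs (Rminus (snd z) (snd w))).

Definition continuous_on (N : G -> Prop) (psi : G -> R * R) : Prop :=
  forall f, N f -> forall eps : R, Rlt R0 eps ->
    exists F : list S, forall g, N g ->
      (forall i, List.In i F -> g i = f i) -> Rlt (circ_dist (psi g) (psi f)) eps.

Definition h_embedded (N C : G -> Prop) : Prop :=
  forall chi : G -> R * R,
    (forall f, C f -> on_circle (chi f)) ->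
    (forall f g, C f -> C g -> chi (zadd f g) = cmul (chi f) (chi g)) ->
    exists psi : G -> R * R,
      (forall f, N f -> on_circle (psi f)) /\
      (forall f g, N f -> N g -> psi (zadd f g) = cmul (psi f) (psi g)) /\
      continuous_on N psi /\
      (forall f, C f -> psi f = chi f).

Definition property_h (N : G -> Prop) : Prop :=
  forall C : G -> Prop, is_subgroup C -> (forall f, C f -> N f) ->
    countable_set C -> h_embedded N C.

(* m(|S|) <= |A|, computed in the compact group Z(p)^S (of weight |S|):
   some G_delta-dense subset of Z(p)^S injects into A *)
Definition m_le (A : Type) : Prop :=
  exists D : G -> Prop, Gdelta_dense D /\
    exists e : G -> A, forall f g, D f -> D g -> e f = e g -> f = g.

End ZpPower.

(* Let D be a G_delta-dense subset of Z(p)^S injecting into A.  Since A^omega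
   injects into S, every sequence of points of D, paired with values in Z(p), is
   coded by a coordinate of S.  For d in D, [twist d] agrees with d except at the
   coordinates coding a sequence (u, w) with u n = d, where it takes the value
   w n; H is the set of these [twist d].  Thus any compatible assignment of
   values to countably many points of D is realised at a single coordinate.
   This gives independence.  For property h, a character of a countable
   subgroup C of <H> is zeta^phi for an additive phi : C -> Z(p); extending phi,
   one label at a time, to a linear functional on the span of the countably
   many twisted points involved and realising its values at one coordinate s
   gives phi(f) = f(s), so zeta^(f s) is a continuous extension.  For
   G_delta-density, a point of D in the given G_delta set that is a label of
   none of the countably many coordinates this set depends on is left unchanged
   there by [twist]; such a point exists because we may also prescribe its
   values on countably many fresh coordinates. *)

From mathcomp Require Import all_boot all_algebra.
From Stdlib Require Import Reals.
From Stdlib Require Cantor.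
From mathcomp Require Import boolp functions Rstruct complex.

Set Implicit Arguments. Unset Strict Implicit. Unset Printing Implicit Defensive.
Import GRing.Theory.
Local Open Scope ring_scope.

Section FunctionalExtension.
Variable K : fieldType.
Implicit Types (l : seq (K * nat)) (n : nat).

Definition lcomb (W : lmodType K) (u : nat -> W) l : W := \sum_(x <- l) x.1 *: u x.2.
Definition coef n l : K := \sum_(x <- l | x.2 == n) x.1.
Definition lscale (a : K) l := [seq (a * x.1, x.2) | x <- l].
Definition ldrop n l := [seq x <- l | x.2 != n].
Definition bounded n l := all (fun x : K * nat => (x.2 < n)%nat) l.

Section LinearCombinations.
Variables (W : lmodType K) (u : nat -> W).

Lemma lcomb_cat l l' : lcomb u (l ++ l') = lcomb u l + lcomb u l'.
Proof. exact: big_cat. Qed.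

Lemma lcomb_scale a l : lcomb u (lscale a l) = a *: lcomb u l.
Proof. by rewrite /lcomb big_map scaler_sumr; apply: eq_bigr => x _; rewrite scalerA. Qed.

Lemma lcomb_reindex (h : nat -> nat) l :
  lcomb u [seq (x.1, h x.2) | x <- l] = lcomb (fun k => u (h k)) l.
Proof. by rewrite /lcomb big_map. Qed.

Lemma lcomb_split n l : lcomb u l = lcomb u (ldrop n l) + coef n l *: u n.
Proof.
rewrite /lcomb big_filter (bigID (fun x => x.2 != n)) /= scaler_suml; congr (_ + _).
by apply: eq_big => [x|x]; rewrite negbK // => /eqP ->.
Qed.

Lemma eq_lcomb (u' : nat -> W) l : u =1 u' -> lcomb u l = lcomb u' l.
Proof. by move=> eq_u; apply: eq_bigr => x _; rewrite eq_u. Qed.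

Lemma eq_lcomb_bounded (u' : nat -> W) n l :
  bounded n l -> (forall i, (i < n)%nat -> u i = u' i) -> lcomb u l = lcomb u' l.
Proof.
move=> /allP bl eq_u; rewrite /lcomb big_seq_cond [RHS]big_seq_cond.
by apply: eq_bigr => x /andP[/bl xn _]; rewrite eq_u.
Qed.

End LinearCombinations.

Lemma coef_cat n l l' : coef n (l ++ l') = coef n l + coef n l'.
Proof. exact: big_cat. Qed.

Lemma coef_scale n a l : coef n (lscale a l) = a * coef n l.
Proof. by rewrite /coef big_map mulr_sumr. Qed.

Lemma bounded_ldrop n l : bounded n.+1 l -> bounded n (ldrop n l).
Proof.
rewrite /bounded all_filter => /allP bl; apply/allP => x xl; apply/implyP => xn.
by rewrite ltn_neqAle xn -ltnS bl.
Qed.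

Lemma bounded_cat n l l' : bounded n (l ++ l') = bounded n l && bounded n l'.
Proof. exact: all_cat. Qed.

Lemma bounded_scale n a l : bounded n (lscale a l) = bounded n l.
Proof. by rewrite /bounded all_map. Qed.

Lemma bounded_ex l : exists n, bounded n l.
Proof.
elim: l => [|x l [n bl]]; first by exists 0%nat.
exists (maxn x.2.+1 n); rewrite /= leq_max ltnSn /=.
by apply: sub_all bl => y /= yn; rewrite leq_max yn orbT.
Qed.

Variables (V : lmodType K) (v : nat -> V) (C : V -> Prop) (phi : V -> K).
Hypothesis C_lin : forall a f g, C f -> C g -> C (a *: f + g).
Hypothesis phi_lin : forall a f g, C f -> C g -> phi (a *: f + g) = a * phi f + phi g.

Lemma comb_closed a b f g : C f -> C g -> C (a *: f + b *: g).
Proof.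
move=> Cf Cg; have C0 : C 0 by rewrite -(addNr f) -scaleN1r; exact: C_lin.
by rewrite -[b *: g]addr0; apply: C_lin => //; apply: C_lin.
Qed.

Lemma functional_comb a b f g : C f -> C g -> phi (a *: f + b *: g) = a * phi f + b * phi g.
Proof.
move=> Cf Cg; have C0 : C 0 by rewrite -(addNr f) -scaleN1r; exact: C_lin.
have phi0 : phi 0 = 0 by have := phi_lin (-1) C0 C0; rewrite scaler0 addr0 mulN1r addNr.
rewrite -[b *: g]addr0 phi_lin //; last exact: C_lin.
by rewrite phi_lin // phi0 addr0.
Qed.

(* Any combination in [C] in which [v n] occurs forces the value at [n], given the
   values below [n]; by [ext_correctS] they all force the same one. *)
Definition ext_value n (w : nat -> K^o) : K :=
  if pselect (exists l, [/\ bounded n.+1 l, C (lcomb v l) & coef n l != 0]) is left ex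
  then let l := proj1_sig (cid ex) in (phi (lcomb v l) - lcomb w (ldrop n l)) / coef n l
  else 0.

Fixpoint ext_upto n : nat -> K^o :=
  if n is m.+1 then fun i => if i == m then ext_value m (ext_upto m) else ext_upto m i
  else fun _ => 0.

Definition ext (i : nat) : K^o := ext_upto i.+1 i.

Lemma ext_uptoE n i : (i < n)%nat -> ext_upto n i = ext i.
Proof.
elim: n => // n IH; rewrite ltnS leq_eqVlt => /orP[/eqP->//|lt_in] /=.
by rewrite (ltn_eqF lt_in) IH.
Qed.

Lemma ext_value_ext n w w' : (forall i, (i < n)%nat -> w i = w' i) ->
  ext_value n w = ext_value n w'.
Proof.
move=> eq_w; rewrite /ext_value; case: pselect => // ex.
case: (cid ex) => l [bl _ _] /=.
by rewrite (eq_lcomb_bounded (bounded_ldrop bl) eq_w).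
Qed.

Lemma extE n : ext n = ext_value n ext.
Proof. by rewrite /ext /= eqxx; apply: ext_value_ext => i; apply: ext_uptoE. Qed.

Definition ext_correct_upto n :=
  forall l, bounded n l -> C (lcomb v l) -> lcomb ext l = phi (lcomb v l).

Lemma ext_correct0 : ext_correct_upto 0.
Proof.
case=> // _; rewrite /lcomb !big_nil => C0.
by have := phi_lin (-1) C0 C0; rewrite scaler0 addr0 mulN1r addNr.
Qed.

Lemma ext_correctS n : ext_correct_upto n -> ext_correct_upto n.+1.
Proof.
move=> IH.
have coef0 l : bounded n.+1 l -> C (lcomb v l) -> coef n l = 0 ->
    lcomb ext l = phi (lcomb v l).
  move=> bl Cl c0; rewrite (lcomb_split _ n) [lcomb v l](lcomb_split _ n) c0 !scale0r !addr0.
  by apply: IH; [exact: bounded_ldrop | rewrite (lcomb_split _ n) c0 scale0r addr0 in Cl].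
move=> l bl Cl; have [c0|cn0] := eqVneq (coef n l) 0; first exact: coef0.
have := extE n; rewrite /ext_value; case: pselect => [ex|[]]; last by exists l.
case: (cid ex) => l0 [bl0 Cl0 c0n0] /= extn.
have ext_l0 : lcomb ext l0 = phi (lcomb v l0).
  by rewrite (lcomb_split _ n) extn [_ *: _]mulrC divfK // addrC subrK.
pose l' := lscale (coef n l0) l ++ lscale (- coef n l) l0.
have v_l' : lcomb v l' = coef n l0 *: lcomb v l + (- coef n l) *: lcomb v l0.
  by rewrite lcomb_cat !lcomb_scale.
have := coef0 l'; rewrite v_l' functional_comb // lcomb_cat !lcomb_scale ext_l0.
rewrite bounded_cat !bounded_scale bl bl0 coef_cat !coef_scale mulrC mulNr subrr.
move=> /(_ isT (comb_closed _ _ Cl Cl0) erefl) /addIr; exact: mulfI.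
Qed.

Lemma functional_extension :
  exists w : nat -> K^o, forall l, C (lcomb v l) -> lcomb w l = phi (lcomb v l).
Proof.
exists ext => l Cl; have [n bl] := bounded_ex l.
have : ext_correct_upto n by elim: n {bl} => [|n]; [exact: ext_correct0 | exact: ext_correctS].
by apply.
Qed.

End FunctionalExtension.

Section PrimeFieldModules.
Variables (p : nat) (V : lmodType 'F_p).
Implicit Types f g : V.

Lemma Fp_scalerE (a : 'F_p) f : a *: f = f *+ a.
Proof. by rewrite -{1}(natr_Zp a) scaler_nat. Qed.

Variable C : V -> Prop.
Hypotheses (C0 : C 0) (C_add : forall f g, C f -> C g -> C (f + g)).

Lemma subgroup_natmul f k : C f -> C (f *+ k).
Proof. by move=> Cf; elim: k => [|k IH]; rewrite ?mulr0n // mulrS; apply: C_add. Qed.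

Lemma subgroup_lin a f g : C f -> C g -> C (a *: f + g).
Proof. by move=> Cf Cg; rewrite Fp_scalerE; apply: C_add => //; apply: subgroup_natmul. Qed.

Lemma additive_lin (phi : V -> 'F_p) :
  (forall f g, C f -> C g -> phi (f + g) = phi f + phi g) ->
  forall a f g, C f -> C g -> phi (a *: f + g) = a * phi f + phi g.
Proof.
move=> phi_add a f g Cf Cg.
have phi0 : phi 0 = 0 by apply: (@addrI _ (phi 0)); rewrite -phi_add ?addr0.
have phi_natmul k : phi (f *+ k) = phi f *+ k.
  elim: k => [|k IH]; first by rewrite !mulr0n phi0.
  by rewrite !mulrS phi_add ?IH //; apply: subgroup_natmul.
rewrite Fp_scalerE -{2}(natr_Zp a) mulr_natl -phi_natmul.
by rewrite phi_add //; apply: subgroup_natmul.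
Qed.

Hypothesis p_pr : prime p.

Lemma natmul_char f : f *+ p = 0.
Proof. by rewrite -scaler_nat (pchar_Fp_0 p_pr) scale0r. Qed.

Variables (F : fieldType) (chi : V -> F).
Hypothesis chi_neq0 : forall f, C f -> chi f != 0.
Hypothesis chi_add : forall f g, C f -> C g -> chi (f + g) = chi f * chi g.

Lemma character0 : chi 0 = 1.
Proof.
by have := chi_add C0 C0; rewrite addr0 -{1}[chi 0]mulr1 => /(mulfI (chi_neq0 C0)).
Qed.

Lemma character_natmul f k : C f -> chi (f *+ k) = chi f ^+ k.
Proof.
move=> Cf; elim: k => [|k IH]; first by rewrite mulr0n character0.
by rewrite mulrS chi_add ?IH ?exprS //; apply: subgroup_natmul.
Qed.

Lemma character_exp_char f : C f -> chi f ^+ p = 1.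
Proof. by move=> Cf; rewrite -character_natmul ?natmul_char ?character0. Qed.

(* If [chi] is not trivial, any value [chi f0 != 1] is a primitive [p]-th root of
   unity, and exponents of its powers are only defined modulo [p]. *)
Lemma character_power : exists2 f0, C f0 &
  exists phi : V -> 'F_p, (forall f g, C f -> C g -> phi (f + g) = phi f + phi g) /\
    forall f, C f -> chi f = chi f0 ^+ phi f.
Proof.
have [[f0 [Cf0 chif0_neq1]]|chi_triv] := pselect (exists f0, C f0 /\ chi f0 != 1); last first.
  exists 0 => //; exists (fun=> 0); split=> [f g _ _|f Cf]; first by rewrite addr0.
  by rewrite expr0; case: (eqVneq (chi f) 1) => [//|ne]; case: chi_triv; exists f.
have prim : p.-primitive_root (chi f0).
  have [m prim_m m_dvd] := prim_order_exists (prime_gt0 p_pr) (character_exp_char Cf0).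
  case/primeP: p_pr => _ /(_ m m_dvd) /orP[/eqP m1|/eqP mp]; last by rewrite -mp.
  by move: prim_m chif0_neq1; rewrite m1 => /prim_expr_order; rewrite expr1 => ->; rewrite eqxx.
pose phi f : 'F_p :=
  if pselect (exists i : nat, chi f = chi f0 ^+ i) is left ex then (proj1_sig (cid ex))%:R else 0.
have phiE f : C f -> chi f = chi f0 ^+ phi f.
  move=> Cf; rewrite /phi; case: pselect => [ex|[]]; last first.
    by have [i ->] := prim_rootP prim (character_exp_char Cf); exists i.
  by case: (cid ex) => i chi_i; rewrite (val_Fp_nat p_pr) expr_mod ?character_exp_char.
exists f0 => [//|]; exists phi; split=> [f g Cf Cg|]; last exact: phiE.
have : chi f0 ^+ phi (f + g) = chi f0 ^+ (phi f + phi g)%nat.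
  by rewrite exprD -(phiE _ Cf) -(phiE _ Cg) -(phiE _ (C_add Cf Cg)) chi_add.
move/eqP; rewrite (eq_prim_root_expr prim) => /eqP e.
by rewrite -(natr_Zp (phi (f + g))) -(Fp_nat_mod p_pr) e (Fp_nat_mod p_pr) natrD !natr_Zp.
Qed.

End PrimeFieldModules.

Definition emb (z : R * R) : R[i] := (z.1 +i* z.2)%C.

Lemma emb_inj : injective emb.
Proof. by case=> a b [c d] [-> ->]. Qed.

Lemma emb_cmul z w : emb (cmul z w) = emb z * emb w.
Proof. by case: z => a b; case: w => c d. Qed.

Lemma emb_neq0 z : on_circle z -> emb z != 0.
Proof.
case: z => a b; rewrite /on_circle /= => h; apply/eqP => -[ha hb].
by move: h; rewrite ha hb Rmult_0_l Rplus_0_l => /esym; exact: R1_neq_R0.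
Qed.

Lemma on_circle_cmul z w : on_circle z -> on_circle w -> on_circle (cmul z w).
Proof.
case: z => a b; case: w => c d; rewrite /on_circle /cmul /= => hz hw.
have -> : Rplus (Rmult (Rminus (Rmult a c) (Rmult b d)) (Rminus (Rmult a c) (Rmult b d)))
    (Rmult (Rplus (Rmult a d) (Rmult b c)) (Rplus (Rmult a d) (Rmult b c)))
  = Rmult (Rplus (Rmult a a) (Rmult b b)) (Rplus (Rmult c c) (Rmult d d)) by ring.
by rewrite hz hw; ring.
Qed.

Definition cexp (z : R * R) (n : nat) : R * R := iter n (cmul z) (R1, R0).

Lemma emb_cexp z n : emb (cexp z n) = emb z ^+ n.
Proof.
elim: n => [|n IH]; last by rewrite /= emb_cmul IH exprS.
by rewrite expr0; reflexivity.
Qed.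

Lemma on_circle_cexp z n : on_circle z -> on_circle (cexp z n).
Proof.
move=> hz; elim: n => [|n IH]; last exact: on_circle_cmul.
by rewrite /on_circle /=; ring.
Qed.

Lemma expr_Fp_morph (R : pzSemiRingType) p (z : R) : prime p -> z ^+ p = 1 ->
  {morph (fun x : 'F_p => z ^+ x) : x y / x + y >-> x * y}.
Proof.
move=> p_pr zp x y /=.
by rewrite -exprD -[RHS](expr_mod _ zp) -(val_Fp_nat p_pr) natrD !natr_Zp.
Qed.

Section ProductTopology.
Variables (p : nat) (S : Type).
Local Notation G := (S -> 'F_p).
Implicit Type D : G -> Prop.

Lemma zopen_coord (s : S) (x : 'F_p) : zopen (fun g : G => g s = x).
Proof. by move=> f fx; exists [:: s] => g /(_ s (or_introl erefl)) ->. Qed.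

Lemma zopen_agree (f : G) (F : list S) :
  zopen (fun g : G => forall i, List.In i F -> g i = f i).
Proof. by move=> g gf; exists F => h hg i iF; rewrite hg ?gf. Qed.

Lemma Gdelta_dense_coord D (s : S) (x : 'F_p) : Gdelta_dense D -> exists d, D d /\ d s = x.
Proof.
move=> D_dense; have [|d [Dd dx]] := D_dense (fun=> fun g => g s = x) (fun=> @zopen_coord s x).
  by exists (fun=> x).
by exists d; split; last exact: dx 0%nat.
Qed.

(* The odd-indexed open sets pin [d] to [g0] at the coordinate [r k], where [g0]
   already differs from [l k]. *)
Lemma Gdelta_dense_avoid D (U : nat -> G -> Prop) (g0 : G) (l : nat -> G) (r : nat -> S) :
  Gdelta_dense D -> (forall n, zopen (U n)) -> (forall n, U n g0) ->
  (forall k, g0 (r k) != l k (r k)) ->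
  exists d, [/\ D d, forall n, U n d & forall k, d <> l k].
Proof.
move=> D_dense U_open U_g0 g0_r.
pose W m := if odd m then fun g : G => g (r m./2) = g0 (r m./2) else U m./2.
have [||d [Dd Wd]] := D_dense W.
- by move=> m; rewrite /W; case: odd; [exact: zopen_coord | exact: U_open].
- by exists g0 => m; rewrite /W; case: odd; [|exact: U_g0].
exists d; split=> // [n | k dl].
  by have := Wd n.*2; rewrite /W odd_double doubleK.
have := Wd k.*2.+1; rewrite /W /= odd_double /= uphalf_double dl => e.
by move: (g0_r k); rewrite e eqxx.
Qed.

End ProductTopology.

(* Diagonalisation: [E (sg k)] differs from [t m] at position [m.*2], and the
   sequences [sg k] are told apart at the odd positions. *)
Lemma fresh_points (A S : Type) (E : (nat -> A) -> S) (a0 a1 : A) (t : nat -> S) :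
  injective E -> a0 <> a1 -> exists r : nat -> S, injective r /\ forall k m, r k <> t m.
Proof.
move=> E_inj a01.
pose dec m : nat -> A :=
  if pselect (exists sg, E sg = t m) is left ex then sval (cid ex) else fun=> a0.
pose flip a := if pselect (a = a0) then a1 else a0.
have flip_neq a : flip a <> a.
  by rewrite /flip; case: pselect => [e|ne] /=; [rewrite e; exact: nesym | exact: nesym].
pose sg k j := if odd j then (if j./2 == k then a1 else a0) else flip (dec j./2 j).
exists (fun k => E (sg k)); split.
  move=> k k' /E_inj /(congr1 (fun s => s k.*2.+1)).
  rewrite /sg /= odd_double /= uphalf_double eqxx.
  by case: eqP => // _ /esym.
move=> k m e; have dec_m : dec m = sg k.
  rewrite /dec; case: pselect => [ex|[]]; last by exists (sg k).
  by case: (cid ex) => sg' /= e'; apply: E_inj; rewrite e'.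
have := congr1 (fun s => s m.*2) dec_m; rewrite /sg /= odd_double doubleK.
exact/nesym/flip_neq.
Qed.

Lemma enum_lists (S : Type) (s0 : S) (F : nat -> list S) :
  exists t : nat -> S, forall n s, List.In s (F n) -> exists m, t m = s.
Proof.
exists (fun m => let ni := Cantor.of_nat m in List.nth ni.2 (F ni.1) s0).
move=> n s /(List.In_nth _ _ s0) [i [_ <-]].
by exists (Cantor.to_nat (n, i)); rewrite Cantor.cancel_of_to.
Qed.

Section Construction.
Variables (p : nat) (S A : Type).
Local Notation G := (S -> 'F_p).
(* [G] as an ['F_p]-vector space: the scalar action needs the regular module. *)
Local Notation V := (S -> ('F_p)^o).
Variables (D : G -> Prop) (iot : G -> A) (E : (nat -> A) -> S) (s0 : S).
Hypothesis D_dense : Gdelta_dense D.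
Hypothesis iot_inj : forall f g, D f -> D g -> iot f = iot g -> f = g.
Hypothesis E_inj : injective E.

Definition DSeq (u : nat -> G) := forall n, D (u n).

Definition dval (x : 'F_p) : G := sval (cid (Gdelta_dense_coord s0 x D_dense)).

Lemma dvalP x : D (dval x) /\ dval x s0 = x.
Proof. exact: svalP (cid (Gdelta_dense_coord s0 x D_dense)). Qed.

Lemma dval_inj : injective dval.
Proof. by move=> x y /(congr1 (fun d => d s0)); rewrite !(proj2 (dvalP _)). Qed.

Definition code (u : nat -> G) (w : nat -> 'F_p) : S :=
  E (fun k => iot (if odd k then dval (w k./2) else u k./2)).

Lemma code_inj u u' w w' : DSeq u -> DSeq u' -> code u w = code u' w' -> u = u' /\ w = w'.
Proof.
move=> Du Du' /E_inj e; split; apply: funext => n.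
  by have := congr1 (fun h => h n.*2) e; rewrite /= odd_double doubleK; apply: iot_inj.
have := congr1 (fun h => h n.*2.+1) e; rewrite /= odd_double /= uphalf_double.
by move/iot_inj => /(_ (proj1 (dvalP _)) (proj1 (dvalP _))) /dval_inj.
Qed.

(* The coordinate [code u w] of [twist (u n)] is [w n]; all other coordinates of
   [twist d] are those of [d]. *)
Definition twist (d : G) : G := fun s =>
  if pselect (exists x, exists u w n, [/\ DSeq u, code u w = s, u n = d & w n = x]) is left ex
  then sval (cid ex) else d s.

Lemma twist_code u w n : DSeq u -> (forall i j, u i = u j -> w i = w j) ->
  twist (u n) (code u w) = w n.
Proof.
move=> Du w_cons; rewrite /twist; case: pselect => [ex|[]]; last by exists (w n), u, w, n.
case: (cid ex) => x /= [u' [w' [n' [Du' e u'n <-]]]].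
by have [eu ew] := code_inj Du' Du e; subst u' w'; apply: w_cons.
Qed.

Lemma twist_id d s : (forall u w n, DSeq u -> code u w = s -> u n <> d) -> twist d s = d s.
Proof.
move=> not_coded; rewrite /twist; case: pselect => [ex|//]; exfalso.
by case: ex => x [u [w [n [Du cu un _]]]]; apply: (not_coded u w n).
Qed.

Definition H (f : G) : Prop := exists2 d, D d & f = twist d.

Lemma H_independent : independent H.
Proof.
move=> n h c h_inj Hh sum0 i0.
have /choice[d dP] : forall i, exists d, D d /\ h i = twist d.
  by move=> i; have [d Dd hd] := Hh i; exists d.
pose lab k := d (insubd i0 k); pose w k : 'F_p := if insubd i0 k == i0 then 1 else 0.
have h_code i : h i (code lab w) = if i == i0 then 1 else 0.
  have -> : h i = twist (lab i) by rewrite /lab valKd; apply: (proj2 (dP i)).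
  rewrite twist_code => [|k|k k' lab_kk']; first by rewrite /w valKd.
    exact: (proj1 (dP _)).
  have /h_inj e : h (insubd i0 k) = h (insubd i0 k').
    by rewrite (proj2 (dP _)) (proj2 (dP (insubd i0 k'))) -/(lab k) lab_kk'.
  by rewrite /w e.
have := sum0 (code lab w); rewrite (bigD1 i0 isT) /= big1 => [|j ji0].
  by rewrite h_code eqxx mulr1 addr0.
by rewrite h_code (negbTE ji0) mulr0.
Qed.

Lemma coded_labels (t : nat -> S) :
  exists l : nat -> G, forall u w j m, DSeq u -> code u w = t m -> exists k, l k = u j.
Proof.
pose dec s : nat -> G :=
  if pselect (exists uw : (nat -> G) * (nat -> 'F_p), DSeq uw.1 /\ code uw.1 uw.2 = s)
  is left ex then (sval (cid ex)).1 else fun=> dval 0.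
exists (fun k => let mj := Cantor.of_nat k in dec (t mj.1) mj.2) => u w j m Du cu.
exists (Cantor.to_nat (m, j)); rewrite Cantor.cancel_of_to /dec.
case: pselect => [ex|[]]; last by exists (u, w).
case: (cid ex) => -[u' w'] /= [Du' cu'].
by have [-> _] := code_inj Du' Du (etrans cu' (esym cu)).
Qed.

Lemma H_Gdelta_dense : Gdelta_dense H.
Proof.
move=> U U_open [f Uf].
have [F FU] := choice (fun n => U_open n f (Uf n)).
have [t tF] := enum_lists s0 F.
have [l lP] := coded_labels t.
have a01 : iot (dval 0) <> iot (dval 1).
  move/(iot_inj (proj1 (dvalP _)) (proj1 (dvalP _)))/dval_inj/eqP.
  by rewrite eq_sym oner_eq0.
have [r [r_inj r_fresh]] := fresh_points t E_inj a01.
pose g0 : G := fun s =>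
  if pselect (exists k, r k = s) is left ex then l (sval (cid ex)) s + 1 else f s.
have g0_r k : g0 (r k) = l k (r k) + 1.
  rewrite /g0; case: pselect => [ex|[]]; last by exists k.
  by case: (cid ex) => k' /= /r_inj ->.
pose W n (g : G) := forall i, List.In i (F n) -> g i = f i.
have W_g0 n : W n g0.
  move=> i /tF[m <-]; rewrite /g0; case: pselect => [[k rk]|//].
  by case: (r_fresh k m).
have W_open n : zopen (W n) by apply: zopen_agree.
have g0_neq k : g0 (r k) != l k (r k).
  by rewrite g0_r -[X in _ != X]addr0 (inj_eq (addrI _)) oner_eq0.
have [d [Dd Wd d_l]] := Gdelta_dense_avoid D_dense W_open W_g0 g0_neq.
exists (twist d); split; first by exists d.
move=> n; apply: FU => i iF; rewrite twist_id; first exact: Wd n i iF.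
move=> u w j Du cu ujd; have [m tm] := tF n i iF.
by have [k lk] := lP u w j m Du (etrans cu (esym tm)); apply: (d_l k); rewrite lk.
Qed.

Lemma gen_H_lcomb g : gen H g ->
  exists (d : nat -> G) (l : seq ('F_p * nat)), DSeq d /\ g = lcomb (fun k => twist (d k) : V) l.
Proof.
elim=> [_ [d Dd ->] | | f1 f2 _ [d1 [l1 [D1 ->]]] _ [d2 [l2 [D2 ->]]] | f _ [d [l [Dd ->]]]].
- by exists (fun=> d), [:: (1, 0%nat)]; split=> //; rewrite /lcomb big_seq1 scale1r.
- exists (fun=> dval 0), [::]; split; first by move=> ?; apply: (proj1 (dvalP _)).
  by rewrite /lcomb big_nil.
- pose d k := if odd k then d2 k./2 else d1 k./2.
  exists d, ([seq (x.1, x.2.*2) | x <- l1] ++ [seq (x.1, x.2.*2.+1) | x <- l2]).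
  split; first by move=> k; rewrite /d; case: odd.
  have d_even : lcomb (fun k => twist (d k.*2) : V) l1 = lcomb (fun k => twist (d1 k) : V) l1.
    by apply: eq_lcomb => k; rewrite /d odd_double doubleK.
  have d_odd : lcomb (fun k => twist (d k.*2.+1) : V) l2 = lcomb (fun k => twist (d2 k) : V) l2.
    by apply: eq_lcomb => k; rewrite /d /= odd_double /= uphalf_double.
  rewrite lcomb_cat (lcomb_reindex _ (fun k => k.*2)) (lcomb_reindex _ (fun k => k.*2.+1)).
  by rewrite d_even d_odd.
- by exists d, (lscale (-1) l); split=> //; rewrite lcomb_scale scaleN1r.
Qed.

Lemma countable_gen_labels (C : G -> Prop) : (forall f, C f -> gen H f) -> countable_set C ->
  exists2 lab : nat -> G, DSeq lab &
    forall f, C f -> exists l : seq ('F_p * nat), f = lcomb (fun k => twist (lab k) : V) l.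
Proof.
move=> C_gen [e e_inj].
have /choice[rep repP] : forall f, exists dl : (nat -> G) * seq ('F_p * nat),
    DSeq dl.1 /\ (C f -> f = lcomb (fun k => twist (dl.1 k) : V) dl.2).
  move=> f; have [Cf|nCf] := pselect (C f).
    by have [d [l [Dd fE]]] := gen_H_lcomb (C_gen f Cf); exists (d, l).
  by exists (fun=> dval 0, [::]); split=> [n|/nCf]; first exact: (proj1 (dvalP _)).
have /choice[elt eltP] : forall k, exists f, (exists g, C g /\ e g = k) -> C f /\ e f = k.
  move=> k; have [[g gk]|no_g] := pselect (exists g, C g /\ e g = k); first by exists g.
  by exists (dval 0) => /no_g.
exists (fun m => let kj := Cantor.of_nat m in (rep (elt kj.1)).1 kj.2).
  by move=> m; apply: (proj1 (repP _)).
move=> f Cf; have [elt_C elt_e] := eltP (e f) (ex_intro _ f (conj Cf erefl)).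
have elt_f : elt (e f) = f by apply: e_inj.
case: (repP f) => _ /(_ Cf) {1}->.
exists [seq (x.1, Cantor.to_nat (e f, x.2)) | x <- (rep f).2].
rewrite (lcomb_reindex _ (fun k => Cantor.to_nat (e f, k))).
by apply: (eq_lcomb (W := V)) => k; rewrite Cantor.cancel_of_to /= elt_f.
Qed.

Lemma countable_subgroup_coord (C : G -> Prop) (phi : G -> 'F_p) :
  is_subgroup C -> (forall f, C f -> gen H f) -> countable_set C ->
  (forall f g, C f -> C g -> phi (zadd f g) = phi f + phi g) ->
  exists s, forall f, C f -> f s = phi f.
Proof.
move=> [C0 [C_add _]] C_gen C_count phi_add.
have [lab labD lab_span] := countable_gen_labels C_gen C_count.
pose v k : V := twist (lab k).
have [w wP] := functional_extension v (subgroup_lin (V := V) C0 C_add)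
  (additive_lin (V := V) C0 C_add phi_add).
have w_cons i j : lab i = lab j -> w i = w j.
  move=> lab_ij; have v_ij : v i = v j by rewrite /v lab_ij.
  have phi0 : phi 0 = 0 by have := wP [::]; rewrite /lcomb !big_nil => /(_ C0) <-.
  have := wP [:: (1, i); (-1, j)]; rewrite /lcomb !big_cons !big_nil v_ij !addr0.
  rewrite !scale1r !scaleN1r subrr => /(_ C0) /eqP.
  by rewrite phi0 subr_eq0 => /eqP.
exists (code lab w) => f Cf; have [l fE] := lab_span f Cf.
have := wP l; rewrite -fE => /(_ Cf) <-; rewrite fE /lcomb fct_sumE /=.
by apply: eq_bigr => x _; rewrite -(twist_code x.2 labD w_cons).
Qed.

Lemma gen_H_property_h : prime p -> property_h (gen H).
Proof.
move=> p_pr C [C0 [C_add C_opp]] C_gen C_count chi chi_circ chi_mul.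
have emb_chi_neq0 f : C f -> emb (chi f) != 0 by move=> Cf; apply/emb_neq0/chi_circ.
have emb_chi_add (f g : V) : C f -> C g -> emb (chi (f + g)) = emb (chi f) * emb (chi g).
  by move=> Cf Cg; rewrite -emb_cmul -chi_mul.
have [f0 Cf0 [phi [phi_add chiE]]] :=
  character_power (V := V) C0 C_add p_pr emb_chi_neq0 emb_chi_add.
have zeta_p := character_exp_char (V := V) C0 C_add p_pr emb_chi_neq0 emb_chi_add Cf0.
have [s phiE] := countable_subgroup_coord (conj C0 (conj C_add C_opp)) C_gen C_count phi_add.
exists (fun f => cexp (chi f0) (f s)); split; [|split; [|split]].
- by move=> f _; apply/on_circle_cexp/chi_circ.
- move=> f g _ _; apply: emb_inj; rewrite emb_cmul !emb_cexp.
  exact: (expr_Fp_morph p_pr zeta_p).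
- move=> f _ eps eps_pos; exists [:: s] => g _ gs.
  rewrite (gs s (or_introl erefl)) /circ_dist !Rminus_diag Rabs_R0 Rmax_left //.
  exact: Rle_refl.
- by move=> f Cf; apply: emb_inj; rewrite emb_cexp (phiE f Cf) -(chiE f Cf).
Qed.

End Construction.

Theorem proposition3p4 (p : nat) (S A : Type) :
  prime p ->
  (exists e : nat -> S, injective e) ->              (* sigma infinite *)
  m_le p S A ->                                       (* m(sigma) <= alpha *)
  (exists e : (nat -> A) -> S, injective e) ->       (* alpha^omega <= sigma *)
  exists H : (S -> 'F_p) -> Prop,
    independent H /\ Gdelta_dense H /\ property_h (gen H).
Proof.
move=> p_pr [e _] [D [D_dense [iot iot_inj]]] [E E_inj].
exists (H iot E (e 0) D_dense); split; first exact: H_independent.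
split; first exact: H_Gdelta_dense.
exact: gen_H_property_h.
Qed.
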